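(* Let $G$ be a $k$-regular graph with $k\ge 43$ and let $C$ be a Hamiltonian cycle of $G$. Then there exists a set $S\subseteq V(G)$ such that (1) no two vertices adjacent on $C$ both lie in $S$, and (2) every vertex $v$ of $G$ either lies in $S$ or is joined to some vertex $w\in S$ by an edge of $G$ not in $C$. *)

From mathcomp Require Import all_boot.
Set Implicit Arguments. Unset Strict Implicit. Unset Printing Implicit Defensive.

Definition simple_graph (T : finType) (e : rel T) : Prop :=
  symmetric e /\ irreflexive e.

Definition regular (T : finType) (e : rel T) (k : nat) : Prop :=
  forall v : T, #|[set w | e v w]| = k.

Definition hamiltonian_cycle (T : finType) (e : rel T) (c : seq T) : Prop :=
  [/\ uniq c, (forall v : T, v \in c), 2 < size c & cycle e c].

Definition cycle_adj (T : eqType) (c : seq T) (v w : T) : bool :=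
  (next c v == w) || (next c w == v).

(* Flip a fair coin f v at every vertex and let S be the set of descents of f
   along C, the vertices u with f u = true and f (next u) = false; two vertices
   consecutive on C are never both descents. A vertex v is dominated unless none
   of its chord neighbours (neighbours through edges outside C, at least k - 2 of
   them) is a descent, an event of probability at most (3/4)^(k-2) that is
   independent of all but at most 4k^2 of the others. For k >= 43 the symmetric
   local lemma, proved here by counting over the cube of all colourings, shows
   that with positive probability no such event occurs. *)

From mathcomp Require Import all_boot zify.
Set Implicit Arguments. Unset Strict Implicit. Unset Printing Implicit Defensive.

Section BooleanCube.

Variable T : finType.
Local Notation cube := {ffun T -> bool}.

Definition determined_by (A : {set cube}) (X : {set T}) :=
  forall f g : cube, {in X, f =1 g} -> (f \in A) = (g \in A).

Lemma determined_by_sub A (X Y : {set T}) :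
  determined_by A X -> X \subset Y -> determined_by A Y.
Proof. by move=> dA /subsetP XY f g fg; apply: dA => x /XY; apply: fg. Qed.

Lemma determined_byI A B (X : {set T}) :
  determined_by A X -> determined_by B X -> determined_by (A :&: B) X.
Proof. by move=> dA dB f g fg; rewrite !inE (dA f g fg) (dB f g fg). Qed.

Lemma determined_by_bigcapC (I : finType) (A : I -> {set cube}) (S : {set I})
    (X : {set T}) :
  (forall j, j \in S -> determined_by (A j) X) ->
  determined_by (\bigcap_(j in S) ~: A j) X.
Proof.
move=> dA f g fg; apply/bigcapP/bigcapP => fS j jS; have := fS j jS;
  by rewrite !inE (dA j jS f g fg).
Qed.

(* Events determined by complementary sets of coordinates are independent:
   gluing the X-part of one point with the ~: X-part of another is a bijection
   of cube * cube that maps (A :&: B) * setT onto A * B. *)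
Lemma card_setI_determined A B (X : {set T}) :
  determined_by A X -> determined_by B (~: X) ->
  #|A :&: B| * #|cube| = #|A| * #|B|.
Proof.
move=> dA dB.
pose glue (f g : cube) := [ffun x => if x \in X then f x else g x].
pose swap (p : cube * cube) := (glue p.1 p.2, glue p.2 p.1).
have swapK : involutive swap.
  by move=> [f g]; congr pair; apply/ffunP => x; rewrite !ffunE; case: (x \in X).
rewrite -cardsT -!cardsX -(card_preimset _ (inv_inj swapK)).
apply: eq_card => -[f g]; rewrite !inE /= andbT.
rewrite (dA (glue f g) f) => [|x xX]; last by rewrite ffunE xX.
by rewrite (dB (glue f g) g) // => x; rewrite inE ffunE => /negbTE ->.
Qed.

Definition coord (z : T) (b : bool) : {set cube} := [set f : cube | f z == b].

Lemma card_coord z b : 2 * #|coord z b| = #|cube|.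
Proof.
pose flip (f : cube) := [ffun x => if x == z then ~~ f x else f x].
have flipK : involutive flip.
  by move=> f; apply/ffunP => x; rewrite !ffunE; case: eqP => // _; rewrite negbK.
have coordC : ~: coord z b = flip @^-1: coord z b.
  by apply/setP => f; rewrite !inE ffunE eqxx; case: (f z); case: b.
by rewrite -(cardsC (coord z b)) coordC (card_preimset _ (inv_inj flipK)) addnn mul2n.
Qed.

Lemma card_setI_coord (B : {set cube}) z b :
  determined_by B (~: [set z]) -> 2 * #|B :&: coord z b| = #|B|.
Proof.
move=> dB; have cube_gt0 : 0 < #|cube| by rewrite card_ffun card_bool expn_gt0.
apply/eqP; rewrite -(eqn_pmul2r cube_gt0) -mulnA setIC.
rewrite (card_setI_determined (X := [set z])) //.
- by rewrite mulnA card_coord mulnC.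
- by move=> f g /(_ z (set11 z)); rewrite !inE => ->.
Qed.

Lemma card_split_coord (A : {set cube}) z :
  #|A :&: coord z true| + #|A :&: coord z false| = #|A|.
Proof.
rewrite -(cardsID (coord z true) A); congr (_ + _).
by apply: eq_card => f; rewrite !inE andbC; case: (f z).
Qed.

End BooleanCube.

Lemma leq_card_bigcup (I T : finType) (S : {set I}) (F : I -> {set T}) :
  #|\bigcup_(j in S) F j| <= \sum_(j in S) #|F j|.
Proof.
elim/big_rec2: _ => [|j n U _ le_Un]; first by rewrite cards0.
by rewrite (leq_trans (leq_card_setU (F j) U).1) ?leq_add2l.
Qed.

Section LocalLemma.

Variables (O I : finType) (A : I -> {set O}).
Implicit Types S : {set I}.

Definition avoiding (S : {set I}) : {set O} := \bigcap_(j in S) ~: A j.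

Lemma avoiding0 : avoiding set0 = setT.
Proof. exact: big_set0. Qed.

Lemma avoidingS S S' : S \subset S' -> avoiding S' \subset avoiding S.
Proof.
move=> /subsetP sSS'; apply/subsetP => x /bigcapP xS'.
by apply/bigcapP => j /sSS'; apply: xS'.
Qed.

Lemma avoidingD1 S i : i \in S -> avoiding S = avoiding (S :\ i) :\: A i.
Proof.
by move=> iS; rewrite /avoiding (big_setD1 i iS); apply/setP => x; rewrite !inE andbC.
Qed.

Lemma avoidingD_subset S S1 :
  avoiding (S :\: S1) \subset
  avoiding S :|: \bigcup_(j in S :&: S1) (A j :&: avoiding (S :\: S1)).
Proof.
apply/subsetP => x xS2; apply/setUP.
have [/exists_inP[j jS1 xAj] | /exists_inP noA] :=
  boolP [exists j in S :&: S1, x \in A j].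
  by right; apply/bigcupP; exists j; rewrite // inE xAj.
left; apply/bigcapP => j jS; rewrite inE; have [jS1 | jS1] := boolP (j \in S1).
  by apply/negP => xAj; apply: noA; exists j; rewrite // inE jS jS1.
by move/bigcapP: xS2 => /(_ j); rewrite inE jS1 jS inE; apply.
Qed.

Variables (Dep : I -> {set I}) (D K : nat).
Hypothesis O_gt0 : 0 < #|O|.
Hypothesis A_indep : forall i S, [disjoint S & Dep i] ->
  #|A i :&: avoiding S| * #|O| = #|A i| * #|avoiding S|.
Hypothesis card_Dep : forall i, #|Dep i| <= D.
Hypothesis card_A : forall i, K * #|A i| <= #|O|.
Hypothesis DK : 4 * D <= K.
Hypothesis K_gt2 : 2 < K.

(* A i is independent of avoiding the far part S2 := S :\: Dep i, and removing
   the near events A j, j in S :&: Dep i, loses at most half of avoiding S2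
   because S2 is strictly smaller than S as soon as there is such a j. *)
Lemma conditional_bound S i :
  (forall S' j, #|S'| < #|S| -> j \notin S' ->
     K * #|A j :&: avoiding S'| <= 2 * #|avoiding S'|) ->
  i \notin S -> K * #|A i :&: avoiding S| <= 2 * #|avoiding S|.
Proof.
move=> IH iS; set S1 := S :&: Dep i; set S2 := S :\: Dep i.
have far : K * #|A i :&: avoiding S2| <= #|avoiding S2|.
  have := A_indep (S := S2) (i := i); rewrite disjoints_subset subsetDr.
  have := card_A i; nia.
have near : K * #|avoiding S2| <= K * #|avoiding S| + 2 * #|S1| * #|avoiding S2|.
  have sum_le : K * \sum_(j in S1) #|A j :&: avoiding S2| <= 2 * #|S1| * #|avoiding S2|.
    rewrite -mulnA mulnCA -sum_nat_const big_distrr /=.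
    apply: leq_sum => j; rewrite inE => /andP[jS jD]; apply: IH.
      have : #|S1| + #|S2| = #|S| := cardsID _ _.
      have : 0 < #|S1| by rewrite card_gt0; apply/set0Pn; exists j; rewrite inE jS jD.
      lia.
    by rewrite inE jD.
  have := subset_leq_card (avoidingD_subset S (Dep i)).
  have := (leq_card_setU (avoiding S) (\bigcup_(j in S1) (A j :&: avoiding S2))).1.
  have := leq_card_bigcup S1 (fun j => A j :&: avoiding S2).
  rewrite -/S1 -/S2; nia.
have : #|S1| <= D by apply: leq_trans (card_Dep i); apply/subset_leq_card/subsetIr.
have : #|A i :&: avoiding S| <= #|A i :&: avoiding S2|.
  by apply/subset_leq_card/setIS/avoidingS/subsetDl.
nia.
Qed.

Lemma avoiding_bound S i :
  i \notin S -> K * #|A i :&: avoiding S| <= 2 * #|avoiding S|.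
Proof.
have [n] := ubnP #|S|; elim: n S i => // n IH S i /ltnSE leSn.
by apply: conditional_bound => S' j ltS'S; apply: IH; apply: leq_trans leSn.
Qed.

Lemma avoiding_gt0 S : 0 < #|avoiding S|.
Proof.
have [n] := ubnP #|S|; elim: n S => // n IH S /ltnSE leSn.
have [/eqP-> | /set0Pn[i iS]] := boolP (S == set0); first by rewrite avoiding0 cardsT.
have ltSn : #|S :\ i| < n by move: leSn; rewrite (cardsD1 i S) iS.
have := avoiding_bound (i := i) (S := S :\ i) (negbT (setD11 i S)); have := IH _ ltSn.
rewrite (avoidingD1 iS); have := cardsID (A i) (avoiding (S :\ i)).
rewrite setIC; nia.
Qed.

Theorem local_lemma : exists x, forall i, x \notin A i.
Proof.
have := avoiding_gt0 setT; rewrite card_gt0 => /set0Pn[x /bigcapP xA].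
by exists x => i; have := xA i (in_setT i); rewrite inE.
Qed.

End LocalLemma.

Lemma next_transitive (T : finType) (c : seq T) (N : {set T}) :
  uniq c -> (forall v, v \in c) -> N != set0 -> {in N, forall w, next c w \in N} ->
  N = setT.
Proof.
move=> c_uniq c_all /set0Pn[x xN] N_next; apply/setP => y; rewrite inE.
have /connectP[p /fpathP[n ->] ->] : fconnect (next c) x y.
  by rewrite (fconnect_cycle (cycle_next c_uniq)).
by rewrite last_traject; elim: n => //= n IH; rewrite N_next.
Qed.

Section Descents.

Variables (T : finType) (nx : T -> T).
Hypothesis nx_inj : injective nx.
Hypothesis nx_neq : forall x, nx x != x.
Hypothesis nx_transitive :
  forall N : {set T}, N != set0 -> {in N, forall w, nx w \in N} -> N = setT.
Local Notation cube := {ffun T -> bool}.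
Implicit Types N : {set T}.

Definition descent_free N : {set cube} :=
  [set f : cube | [forall w in N, f w ==> f (nx w)]].

Lemma descent_free_determined N : determined_by (descent_free N) (N :|: nx @: N).
Proof.
move=> f g fg; rewrite !inE; apply: eq_forallb_in => w wN.
by rewrite !fg ?inE ?wN ?imset_f ?orbT.
Qed.

Lemma descent_free_determinedC N z :
  z \notin N -> z \notin nx @: N -> determined_by (descent_free N) (~: [set z]).
Proof.
move=> zN znN; have sub : N :|: nx @: N \subset ~: [set z].
  by apply/subsetP => x; rewrite !inE; apply: contraL => /eqP->; rewrite negb_or zN.
exact: determined_by_sub (@descent_free_determined N) sub.
Qed.

Lemma descent_freeD1 N w : w \in N ->
  descent_free N = descent_free (N :\ w) :&: [set f : cube | f w ==> f (nx w)].
Proof.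
move=> wN; apply/setP => f; rewrite !inE.
apply/forall_inP/andP => [fN | [/forall_inP fN' fw] y yN].
  by split; [apply/forall_inP => y /setD1P[_ /fN] | apply: fN].
by have [-> // | yw] := eqVneq y w; apply: fN'; rewrite !inE yw.
Qed.

Lemma exists_exit N : N != set0 -> N != setT -> exists2 w, w \in N & nx w \notin N.
Proof.
move=> N0 NT; apply/exists_inP; apply: contraR NT => /exists_inP noexit.
by apply/eqP/nx_transitive => // w wN; apply/negPn/negP => nwN; apply: noexit; exists w.
Qed.

(* Removing from N a point w whose successor z leaves N: the coordinate z is then
   read only by the constraint at w, so conditioning on f z halves the counts. *)
Lemma card_descent_freeD1 N w : w \in N -> nx w \notin N ->
  let E := descent_free (N :\ w) in
  2 * #|descent_free N| = #|E| + #|E :&: coord w false| /\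
  2 * #|descent_free N :&: coord (nx w) false| = #|E :&: coord w false|.
Proof.
move=> wN nwN E; set z := nx w.
have dE : determined_by E (~: [set z]).
  apply: descent_free_determinedC; first by rewrite !inE negb_and nwN orbT.
  by apply/imsetP => -[y]; rewrite !inE => /andP[yw _] /nx_inj/eqP; rewrite eq_sym (negbTE yw).
have dEw b : determined_by (E :&: coord w b) (~: [set z]).
  by apply: determined_byI dE _ => f g fg; rewrite !inE fg // !inE eq_sym nx_neq.
have DFw1 : descent_free N :&: coord w true =
            E :&: coord w true :&: coord z true.
  by apply/setP => f; rewrite (descent_freeD1 wN) !inE -/z; case: (f w) (f z) => [] [];
    rewrite ?andbT ?andbF.
have DFw0 : descent_free N :&: coord w false = E :&: coord w false.
  by apply/setP => f; rewrite (descent_freeD1 wN) !inE -/z; case: (f w) (f z) => [] [];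
    rewrite ?andbT ?andbF.
have DFz0 : descent_free N :&: coord z false = E :&: coord w false :&: coord z false.
  by apply/setP => f; rewrite (descent_freeD1 wN) !inE -/z; case: (f w) (f z) => [] [];
    rewrite ?andbT ?andbF.
split.
  rewrite -(card_split_coord _ w) DFw1 DFw0 -[in RHS](card_split_coord E w).
  have := card_setI_coord true (dEw true); have := card_setI_coord false (dEw false).
  lia.
by rewrite DFz0 card_setI_coord.
Qed.

(* The second bound, at a point nx w where N is left, carries the induction. *)
Lemma descent_free_bound N : N != setT ->
  4 ^ #|N| * #|descent_free N| <= 3 ^ #|N| * #|cube| /\
  {in N, forall w, nx w \notin N ->
     3 * 4 ^ #|N| * #|descent_free N :&: coord (nx w) false| <= 3 ^ #|N| * #|cube|}.
Proof.
have [n] := ubnP #|N|; elim: n N => // n IH N /ltnSE leNn NT.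
have step w : w \in N -> nx w \notin N ->
    4 ^ #|N| * #|descent_free N| <= 3 ^ #|N| * #|cube| /\
    3 * 4 ^ #|N| * #|descent_free N :&: coord (nx w) false| <= 3 ^ #|N| * #|cube|.
  move=> wN nwN; have [card_DF card_DFz] := card_descent_freeD1 wN nwN.
  have wN' : w \notin N :\ w by rewrite setD11.
  have cardN : #|N| = #|N :\ w|.+1 by rewrite (cardsD1 w N) wN.
  have N'T : N :\ w != setT by apply: contraNneq wN' => ->; rewrite inE.
  have ltN'n : #|N :\ w| < n by rewrite -cardN.
  have [IH1 IH2] := IH (N :\ w) ltN'n N'T.
  have exit_bound : 2 * 4 ^ #|N :\ w| * #|descent_free (N :\ w) :&: coord w false|
                      <= 3 ^ #|N :\ w| * #|cube|.
    have [/imsetP[y yN' def_w] | wnN'] := boolP (w \in nx @: (N :\ w)).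
      by have := IH2 y yN'; rewrite -def_w => /(_ wN'); nia.
    by rewrite mulnAC (card_setI_coord false (descent_free_determinedC wN' wnN')) mulnC.
  by rewrite cardN !expnS; split; nia.
split; last by move=> w wN nwN; have [] := step w wN nwN.
have [/eqP-> | N0] := boolP (N == set0).
  by rewrite cards0 !expn0 !mul1n max_card.
by have [w wN nwN] := exists_exit N0 NT; have [] := step w wN nwN.
Qed.

End Descents.

Lemma exp3_le_exp4 m : 41 <= m -> 16 * (m + 2) ^ 2 * 3 ^ m <= 4 ^ m.
Proof.
elim: m => // m IH; rewrite leq_eqVlt => /orP[/eqP <- | lt41m]; first by lia.
by have := IH lt41m; rewrite !expnS; nia.
Qed.

Section HamiltonianCycle.

Variables (T : finType) (e : rel T) (k : nat) (c : seq T).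
Hypotheses (e_sym : symmetric e) (e_irr : irreflexive e) (e_reg : regular e k).
Hypotheses (c_uniq : uniq c) (c_all : forall v, v \in c) (c_cycle : cycle e c).
Local Notation cube := {ffun T -> bool}.

Definition chords v := [set w | e v w && ~~ cycle_adj c v w].

Definition chord_support v := chords v :|: next c @: chords v.

Definition no_chord_descent v := descent_free (next c) (chords v).

Definition overlapping v := [set u | ~~ [disjoint chord_support u & chord_support v]].

Lemma card_chords_le v : #|chords v| <= k.
Proof.
by rewrite -(e_reg v) subset_leq_card //; apply/subsetP => w; rewrite !inE => /andP[].
Qed.

(* Only the two cycle neighbours of v are lost. *)
Lemma card_chords_ge v : k <= #|chords v| + 2.
Proof.
have sub : [set w | e v w] \subset chords v :|: [set next c v; prev c v].
  apply/subsetP => w; rewrite !inE => evw; rewrite evw /=.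
  case/orP: (orbN (cycle_adj c v w)) => [/orP[/eqP-> | /eqP<-] | ->]; last by [].
    by rewrite eqxx orbT.
  by rewrite prev_next // eqxx !orbT.
rewrite -(e_reg v); apply: leq_trans (subset_leq_card sub) _.
by rewrite (leq_trans (leq_card_setU _ _).1) // leq_add2l cards2; case: (_ != _).
Qed.

Lemma card_chord_support v : #|chord_support v| <= 2 * k.
Proof.
apply: leq_trans (leq_card_setU _ _).1 _.
by have := leq_imset_card (next c) (chords v); have := card_chords_le v; lia.
Qed.

(* A vertex x lies in chord_support u only if u is adjacent to x or to prev c x. *)
Lemma card_overlapping v : #|overlapping v| <= 4 * k ^ 2.
Proof.
pose reach x := [set u | e x u] :|: [set u | e (prev c x) u].
have sub : overlapping v \subset \bigcup_(x in chord_support v) reach x.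
  apply/subsetP => u; rewrite inE -setI_eq0 => /set0Pn[x /setIP[xu xv]].
  apply/bigcupP; exists x => //; rewrite !inE.
  case/setUP: xu => [| /imsetP[y yu ->]]; first by rewrite inE e_sym => /andP[-> _].
  by rewrite prev_next //; move: yu; rewrite inE e_sym => /andP[-> _]; rewrite orbT.
apply: leq_trans (subset_leq_card sub) _; apply: leq_trans (leq_card_bigcup _ _) _.
have reach_le x : #|reach x| <= 2 * k.
  by rewrite (leq_trans (leq_card_setU _ _).1) // !e_reg addnn mul2n.
apply: leq_trans (_ : _ <= \sum_(x in chord_support v) 2 * k) _.
  by apply: leq_sum => x _; apply: reach_le.
by rewrite sum_nat_const; have := card_chord_support v; nia.
Qed.

Lemma no_chord_descent_indep i (S : {set T}) : [disjoint S & overlapping i] ->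
  #|no_chord_descent i :&: avoiding no_chord_descent S| * #|cube| =
  #|no_chord_descent i| * #|avoiding no_chord_descent S|.
Proof.
move=> S_far; apply: (card_setI_determined (X := chord_support i)).
  exact: descent_free_determined.
apply: determined_by_bigcapC => j jS.
have : j \notin overlapping i by rewrite (disjointFr S_far jS).
rewrite inE negbK disjoints_subset => sub.
exact: determined_by_sub (@descent_free_determined _ _ (chords j)) sub.
Qed.

Lemma next_neq x : next c x != x.
Proof. by apply: contraTneq (next_cycle c_cycle (c_all x)) => ->; rewrite e_irr. Qed.

Lemma card_no_chord_descent v :
  43 <= k -> 16 * k ^ 2 * #|no_chord_descent v| <= #|cube|.
Proof.
move=> k_ge43; have chordsT : chords v != setT.
  by apply/eqP => /setP/(_ v); rewrite !inE e_irr.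
have [bound _] := descent_free_bound (can_inj (prev_next c_uniq)) next_neq
  (fun N => next_transitive c_uniq c_all) chordsT.
have kn := card_chords_ge v; set n := #|chords v| in bound kn *.
have k2 : 16 * k ^ 2 <= 16 * (n + 2) ^ 2 by rewrite leq_mul2l leq_exp2r // kn orbT.
have exp4_gt0 : 0 < 4 ^ n by rewrite expn_gt0.
rewrite -(leq_pmul2l exp4_gt0) mulnCA; apply: leq_trans (leq_mul k2 bound) _.
by rewrite mulnA leq_mul2r exp3_le_exp4 ?orbT //; lia.
Qed.

End HamiltonianCycle.

Theorem theorem4p3 (T : finType) (e : rel T) (k : nat) (c : seq T) :
  simple_graph e -> regular e k -> 43 <= k -> hamiltonian_cycle e c ->
  exists S : {set T},
    (forall v w : T, cycle_adj c v w -> ~~ ((v \in S) && (w \in S))) /\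
    (forall v : T, v \in S \/ exists2 w : T, w \in S & e v w && ~~ cycle_adj c v w).
Proof.
move=> [e_sym e_irr] e_reg k_ge43 [c_uniq c_all _ c_cycle].
have [f f_good] : exists f : {ffun T -> bool}, forall v, f \notin no_chord_descent e c v.
  apply: (local_lemma (Dep := overlapping e c) (D := 4 * k ^ 2) (K := 16 * k ^ 2)).
  - by rewrite card_ffun card_bool expn_gt0.
  - exact: no_chord_descent_indep.
  - exact: card_overlapping.
  - by move=> v; apply: card_no_chord_descent.
  - lia.
  - lia.
exists [set u | f u && ~~ f (next c u)]; split.
  by move=> v w /orP[] /eqP <-; rewrite !inE; case: (f (next c _)); rewrite ?andbF.
move=> v; right; move: (f_good v); rewrite inE negb_forall_in => /exists_inP[w wv fw].
by exists w; [rewrite inE -negb_imply | rewrite inE in wv].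
Qed.
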